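(* Let $(M,\circ,\mathrm{OR})$ be a free $\mathbb{D}$-module of rank 3 endowed with a scalar product $\circ$ and an orientation $\mathrm{OR}$. Let $E$ be the set of real 3-dimensional subspaces $P\subset M$ such that $\mathfrak{Du}(x\circ y)=0$ for all $x,y\in P$ and $P\cap\epsilon M=\{0\}$. Then $E$, with the subtraction $B-A$ described in the context, is a 3-dimensional Euclidean affine space modelled on $(V,\cdot,\mathrm{or})$, where $V=M/\epsilon M$ carries the inner product and orientation induced from $M$. Moreover, if $\mathcal{S}$ denotes the space of screws on $E$ with its natural $\mathbb{D}$-module geometry structure, then the map $\beta:M\to\mathcal{S}$ defined by $\beta(z)(A)=\mathcal{s}(A)$, where $z=a+\epsilon\,\mathcal{s}(A)$ is the unique decomposition with $a\in A$ and $\mathcal{s}(A)\in V$, is a well-defined $\mathbb{D}$-linear isomorphism which preserves the scalar product and the orientation, and hence also the cross product ($\beta(z_1\times z_2)=[\beta(z_1),\beta(z_2)]$).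
   Context: $\mathbb{D}=\{a+\epsilon b: a,b\in\mathbb{R}\}$ is the ring of dual numbers, $\epsilon^2=0$, with $\mathfrak{Re}(a+\epsilon b)=a$, $\mathfrak{Du}(a+\epsilon b)=b$. A scalar product on a free $\mathbb{D}$-module $M$ is a symmetric $\mathbb{D}$-bilinear map $\circ:M\times M\to\mathbb{D}$ with $\mathfrak{Re}(x\circ x)\ge0$ for all $x$, with equality iff $x\in\epsilon M$. An orientation of $M$ is a choice of one of the two equivalence classes of ordered bases, where $\{b'_j=A_{jk}b_k\}\sim\{b_k\}$ iff $\det\mathfrak{Re}(A)>0$ ($A$ a dual-number matrix). $V=M/\epsilon M$, with quotient map $\pi$; $\mathfrak{Re}(\cdot\circ\cdot)$ descends to an inner product $\cdot$ on $V$, and the orientation of $M$ descends to an orientation of $V$ (bases of $M$ project to bases of $V$). Multiplication by $\epsilon$ induces a real isomorphism $V\to\epsilon M$, also denoted $\epsilon$. On $M$, the cross product is $x\times y=x^iy^j\epsilon_{ijk}m_k$ where $x=x^im_i$, $y=y^im_i$ and $\{m_i\}$ is any positive orthonormal basis ($m_i\circ m_j=\delta_{ij}$). For $P\in E$ and $v\in V$, $v^P$ is the unique element of $P$ with $\pi(v^P)=v$; since $M=P\oplus\epsilon M$, each $z\in M$ decomposes uniquely as $z=a+\epsilon v$ with $a\in P$, $v\in V$. Subtraction on $E$: for $A,B\in E$ and a positive orthonormal basis $\{e_i\}$ of $V$, one has $e^B_i=e^A_i+\epsilon\,\epsilon_{ijk}d^k e^A_j$ for a real vector $(d^k)$, and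 $B-A:=d^ke_k\in V$. Screws on a Euclidean space $E$ modelled on $(V,\cdot,\mathrm{or})$: a screw is a map $\mathcal{s}:E\to V$ for which there is $s\in V$ (the resultant) with $\mathcal{s}(Q)-\mathcal{s}(P)=s\times(Q-P)$ for all $P,Q\in E$; they form a 6-dimensional real vector space $\mathcal{S}$. Its natural $\mathbb{D}$-module geometry: $\epsilon\,\mathcal{s}$ is the constant field equal to the resultant $s$; scalar product $\mathcal{s}_1\circ\mathcal{s}_2=s_1\cdot s_2+\epsilon(s_1\cdot\mathcal{s}_2(P)+\mathcal{s}_1(P)\cdot s_2)$ (independent of $P$); orientation: for a positive orthonormal frame $(P,(e_1,e_2,e_3))$ of $E$, the basis $(\ell_1,\ell_2,\ell_3)$, $\ell_i(Q)=e_i\times(Q-P)$, is declared positive. The commutator of screws is $[\mathcal{s}_1,\mathcal{s}_2](P)=s_1\times\mathcal{s}_2(P)+\mathcal{s}_1(P)\times s_2$. *)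

From HB Require Import structures.
From mathcomp Require Import all_boot all_order all_algebra.
From mathcomp Require Import reals.
Set Implicit Arguments. Unset Strict Implicit. Unset Printing Implicit Defensive.
Import Order.TTheory GRing.Theory Num.Theory.
Local Open Scope ring_scope.

(* ---------- Dual numbers  a + eps b  represented as pairs (a, b) ---------- *)
Definition dual (R : Type) := (R * R)%type.
Definition dRe (R : Type) (z : dual R) : R := z.1.
Definition dDu (R : Type) (z : dual R) : R := z.2.
Definition dual_add (R : nzRingType) (z w : dual R) : dual R := (z.1 + w.1, z.2 + w.2).
(* (a + eps b)(c + eps d) = ac + eps (ad + bc) *)
Definition dual_mul (R : nzRingType) (z w : dual R) : dual R :=
  (z.1 * w.1, z.1 * w.2 + z.2 * w.1).
Definition dual_real (R : nzRingType) (r : R) : dual R := (r, 0).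
Definition dual_epsilon (R : nzRingType) : dual R := (0, 1).

(* Levi-Civita symbol on indices 0,1,2 *)
Definition levi (R : fieldType) (i j k : 'I_3) : R :=
  ((j : nat)%:R - (i : nat)%:R) * ((k : nat)%:R - (j : nat)%:R)
  * ((k : nat)%:R - (i : nat)%:R) / 2%:R.

Section Defs.
Variable R : realType.
Variables M V : vectType R.

(* A D-module structure on the real vector space M is given by a real-linear
   eps : M -> M with eps \o eps = 0; (a + eps b) . x = a x + b eps(x). *)
Definition dscale (eps : M -> M) (c : dual R) (x : M) : M := c.1 *: x + c.2 *: eps x.

Definition dcomb (eps : M -> M) (b : 'I_3 -> M) (c : 'I_3 -> dual R) : M :=
  \sum_i dscale eps (c i) (b i).

Definition is_Dbasis (eps : M -> M) (b : 'I_3 -> M) : Prop :=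
  (forall x, exists c, x = dcomb eps b c) /\
  (forall c c', dcomb eps b c = dcomb eps b c' -> forall i, c i = c' i).

(* b is a positive basis w.r.t. the orientation represented by the D-basis OR:
   b_j = A_jk OR_k with A = A0 + eps A1 a dual matrix and det Re(A) = det A0 > 0 *)
Definition posM (eps : M -> M) (OR : 'I_3 -> M) (b : 'I_3 -> M) : Prop :=
  is_Dbasis eps b /\
  exists A0 A1 : 'M[R]_3,
    (forall j, b j = \sum_k (A0 j k *: OR k + A1 j k *: eps (OR k))) /\ 0 < \det A0.

Definition orthonormalM (sp : M -> M -> dual R) (m : 'I_3 -> M) : Prop :=
  forall i j, sp (m i) (m j) = dual_real (i == j)%:R.

Definition posV (pi : M -> V) (OR : 'I_3 -> M) (e : 'I_3 -> V) : Prop :=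
  exists C : 'M[R]_3, (forall i, e i = \sum_k C i k *: pi (OR k)) /\ 0 < \det C.

Definition orthonormalV (dotV : V -> V -> R) (e : 'I_3 -> V) : Prop :=
  forall i j, dotV (e i) (e j) = (i == j)%:R.

Definition posONV pi OR dotV (e : 'I_3 -> V) : Prop :=
  posV pi OR e /\ orthonormalV dotV e.

Definition crossV (dotV : V -> V -> R) (e : 'I_3 -> V) (u w : V) : V :=
  \sum_i \sum_j \sum_k (@levi R i j k * (dotV u (e i) * dotV w (e j))) *: e k.

Definition inE (eps : M -> M) (sp : M -> M -> dual R) (P : {vspace M}) : Prop :=
  \dim P = 3%N /\
  (forall x y, x \in P -> y \in P -> dDu (sp x y) = 0) /\
  (forall x, x \in P -> (exists y, x = eps y) -> x = 0).

Definition Espace (eps : M -> M) (sp : M -> M -> dual R) : Type :=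
  {P : {vspace M} | inE eps sp P}.

Definition is_lift (pi : M -> V) (P : {vspace M}) (v : V) (x : M) : Prop :=
  x \in P /\ pi x = v.

Definition SubRel (eps : M -> M) (pi : M -> V) OR dotV
    (B A : {vspace M}) (d : V) : Prop :=
  forall e, posONV pi OR dotV e ->
  forall xA xB : 'I_3 -> M,
    (forall i, is_lift pi A (e i) (xA i)) ->
    (forall i, is_lift pi B (e i) (xB i)) ->
    forall i, xB i = xA i + \sum_j \sum_k (@levi R i j k * dotV d (e k)) *: eps (xA j).

Definition is_screw (E : Type) (minus : E -> E -> V) pi OR dotV
    (s : E -> V) (r : V) : Prop :=
  forall P Q e, posONV pi OR dotV e -> s Q - s P = crossV dotV e r (minus Q P).

End Defs.

(* A point P of E meets eps M trivially and has dimension 3, so pi restricts to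
   an isomorphism P -> V with inverse v |-> v^P.  For two points the lifts differ
   by v^B = v^A + eps (L v)^A, and isotropy of A and B makes L skew for the
   induced inner product, i.e. L = d x _ ; this d is B - A, and conversely every
   skew L yields an isotropic point, which gives Weyl's axioms.  For z in M,
   beta z A is characterised by (beta z A) . u = Du (z o u^A); comparing two
   points gives beta z B - beta z A = pi z x (B - A), so beta z is a screw with
   resultant pi z, and the same identity yields Du (z1 o z2) =
   pi z1 . beta z2 A + beta z1 A . pi z2.  Orientation and cross product are then
   checked in coordinates of positive orthonormal frames (built by Gram-Schmidt),
   between which the cross product does not change since they differ by a
   rotation. *)

From HB Require Import structures.
From mathcomp Require Import all_boot all_order all_algebra.
From mathcomp Require Import reals ring lra.
From Stdlib Require Import ProofIrrelevance FunctionalExtensionality.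
Set Implicit Arguments. Unset Strict Implicit. Unset Printing Implicit Defensive.
Import Order.TTheory GRing.Theory Num.Theory.
Local Open Scope ring_scope.

Notation i0 := (@Ordinal 3 0 isT).
Notation i1 := (@Ordinal 3 1 isT).
Notation i2 := (@Ordinal 3 2 isT).

Lemma big_ord3 (V : nmodType) (F : 'I_3 -> V) : \sum_(i < 3) F i = F i0 + F i1 + F i2.
Proof. by rewrite !big_ord_recr big_ord0 /= add0r; congr (F _ + F _ + F _); apply: val_inj. Qed.

Lemma ord3_ind (P : 'I_3 -> Prop) : P i0 -> P i1 -> P i2 -> forall i, P i.
Proof.
by move=> P0 P1 P2 [[|[|[|n]]] lt_n3] //; rewrite (bool_irrelevance lt_n3 isT).
Qed.

Lemma det_mx33 (R : comNzRingType) (A : 'M[R]_3) : \det A =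
  A i0 i0 * A i1 i1 * A i2 i2 - A i0 i0 * A i1 i2 * A i2 i1
 - A i0 i1 * A i1 i0 * A i2 i2 + A i0 i1 * A i1 i2 * A i2 i0
 + A i0 i2 * A i1 i0 * A i2 i1 - A i0 i2 * A i1 i1 * A i2 i0.
Proof.
rewrite (expand_det_row _ i0) big_ord3 /cofactor.
rewrite !(expand_det_row _ ord0) !big_ord_recr !big_ord0 /= /cofactor !det_mx11 !mxE /=.
pose a (m n : nat) := A (inord m) (inord n).
have -> : A = \matrix_(i, j) a i j by apply/matrixP => i j; rewrite mxE /a !inord_val.
rewrite !mxE /a /= /bump /=; ring.
Qed.

Definition cross3 (R : nzRingType) (p q : 'I_3 -> R) (k : 'I_3) : R :=
  match (k : nat) with
  | 0 => p i1 * q i2 - p i2 * q i1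
  | 1 => p i2 * q i0 - p i0 * q i2
  | _ => p i0 * q i1 - p i1 * q i0
  end.

Lemma sum_levi_cross3 (R : realType) (p q : 'I_3 -> R) k :
  \sum_i \sum_j levi R i j k * (p i * q j) = cross3 p q k.
Proof. by move: k; apply: ord3_ind; rewrite !big_ord3 /levi /cross3 /=; field. Qed.

Lemma levi_cross3 (R : realType) (i j k : 'I_3) :
  levi R i j k = cross3 (fun l => (l == i)%:R) (fun l => (l == j)%:R) k.
Proof.
by move: i j k; do 3!apply: ord3_ind; rewrite /levi /cross3 /=; try field.
Qed.

Lemma cross3_mulmx (R : comNzRingType) (Q : 'M[R]_3) (p q : 'I_3 -> R) c :
  \sum_k cross3 (fun i => \sum_a Q i a * p a) (fun i => \sum_a Q i a * q a) k * Q k c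
  = \det Q * cross3 p q c.
Proof. by move: c; apply: ord3_ind; rewrite det_mx33 !big_ord3 /cross3 /= !big_ord3; ring. Qed.

Record euclidean3 (R : realType) (V : vectType R) (dotV : V -> V -> R) : Prop :=
  Euclidean3 {
    dim_euclidean3 : \dim {:V} = 3%N;
    dotC : forall u w, dotV u w = dotV w u;
    dotDZl : forall a u u' w, dotV (a *: u + u') w = a * dotV u w + dotV u' w;
    dot_gt0 : forall u, u != 0 -> 0 < dotV u u }.

Definition pos_wrt (R : realType) (V : vectType R) (o e : 'I_3 -> V) : Prop :=
  exists C : 'M[R]_3, (forall i, e i = \sum_k C i k *: o k) /\ 0 < \det C.

Existing Class euclidean3.

Section Euclidean3.
Context {R : realType} {V : vectType R} {dotV : V -> V -> R} {V3 : euclidean3 dotV}.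

Let dotC := dotC V3.
Let dotDZl := dotDZl V3.
Let dot_gt0 := dot_gt0 V3.

Lemma dot0l w : dotV 0 w = 0.
Proof. by have := dotDZl 1 0 0 w; rewrite scale1r addr0 mul1r => h; lra. Qed.
Lemma dotDl u u' w : dotV (u + u') w = dotV u w + dotV u' w.
Proof. by have := dotDZl 1 u u' w; rewrite scale1r mul1r. Qed.
Lemma dotZl a u w : dotV (a *: u) w = a * dotV u w.
Proof. by have := dotDZl a u 0 w; rewrite !addr0 dot0l addr0. Qed.
Lemma dotZr a u w : dotV w (a *: u) = a * dotV w u.
Proof. by rewrite !(dotC w) dotZl. Qed.
Lemma dotNl u w : dotV (- u) w = - dotV u w.
Proof. by rewrite -scaleN1r dotZl mulN1r. Qed.
Lemma dotBl u u' w : dotV (u - u') w = dotV u w - dotV u' w.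
Proof. by rewrite dotDl dotNl. Qed.
Lemma dot_suml I (r : seq I) (P : pred I) (F : I -> V) w :
  dotV (\sum_(i <- r | P i) F i) w = \sum_(i <- r | P i) dotV (F i) w.
Proof. exact: (big_morph (dotV^~ w) (fun x y => dotDl x y w) (dot0l w)). Qed.
Lemma dot_sumr I (r : seq I) (P : pred I) (F : I -> V) w :
  dotV w (\sum_(i <- r | P i) F i) = \sum_(i <- r | P i) dotV w (F i).
Proof. by rewrite dotC dot_suml; apply: eq_bigr => i _; rewrite dotC. Qed.

Lemma crossV0l (e : 'I_3 -> V) w : crossV dotV e 0 w = 0.
Proof.
rewrite /crossV big1 // => i _; rewrite big1 // => j _; rewrite big1 // => k _.
by rewrite dot0l mul0r mulr0 scale0r.
Qed.

Lemma crossV0r (e : 'I_3 -> V) u : crossV dotV e u 0 = 0.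
Proof.
rewrite /crossV big1 // => i _; rewrite big1 // => j _; rewrite big1 // => k _.
by rewrite dot0l !mulr0 scale0r.
Qed.

Lemma dot_ext u u' : (forall w, dotV u w = dotV u' w) -> u = u'.
Proof.
move=> h; apply/eqP; rewrite -subr_eq0; apply/negPn/negP => /dot_gt0.
by rewrite dotBl !h subrr ltxx.
Qed.

Section GramSchmidt.
Variable o : 'I_3 -> V.
Hypothesis o_free : forall a, \sum_k a k *: o k = 0 -> forall k, a k = 0.

Let lc (a : 'I_3 -> R) : V := \sum_k a k *: o k.
Let lcB a b : lc a - lc b = lc (fun k => a k - b k).
Proof. by rewrite /lc -sumrB; apply: eq_bigr => k _; rewrite scalerBl. Qed.
Let lcZ s a : s *: lc a = lc (fun k => s * a k).
Proof. by rewrite /lc scaler_sumr; apply: eq_bigr => k _; rewrite scalerA. Qed.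
Let lc_delta k : o k = lc (fun l => (l == k)%:R).
Proof. by move: k; apply: ord3_ind; rewrite /lc big_ord3 /= !scale0r ?scale1r ?addr0 ?add0r. Qed.

Let s (u : V) : R := (Num.sqrt (dotV u u))^-1.
Let normalize (u : V) : V := s u *: u.
Let dot_normalize u : u != 0 -> dotV (normalize u) (normalize u) = 1.
Proof.
move=> /dot_gt0 uu_gt0; rewrite dotZl dotZr /s -{3}(sqr_sqrtr (ltW uu_gt0)).
have : Num.sqrt (dotV u u) != 0 by rewrite gt_eqF // sqrtr_gt0.
by move=> ?; field.
Qed.
Let s_gt0 u : u != 0 -> 0 < s u.
Proof. by move=> /dot_gt0 ?; rewrite invr_gt0 sqrtr_gt0. Qed.
Let normalize_lc u a : u = lc a -> normalize u = lc (fun k => s u * a k).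
Proof. by move=> uE; rewrite /normalize {2}uE lcZ. Qed.
Let lc_neq0 a k : a k != 0 -> lc a != 0.
Proof. by move=> ak; apply/eqP => /o_free /(_ k) /eqP; apply/negP. Qed.

Let w0 := o i0.
Let g0 := normalize w0.
Let w1 := o i1 - dotV (o i1) g0 *: g0.
Let g1 := normalize w1.
Let w2 := o i2 - dotV (o i2) g0 *: g0 - dotV (o i2) g1 *: g1.
Let g2 := normalize w2.

Let c0 (k : 'I_3) : R := (k == i0)%:R.
Let c1 (k : 'I_3) : R := (k == i1)%:R - dotV (o i1) g0 * (s w0 * c0 k).
Let c2 (k : 'I_3) : R :=
  (k == i2)%:R - dotV (o i2) g0 * (s w0 * c0 k) - dotV (o i2) g1 * (s w1 * c1 k).

Let w0E : w0 = lc c0. Proof. exact: lc_delta. Qed.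
Let w1E : w1 = lc c1.
Proof.
by rewrite /w1; set t := dotV _ g0; rewrite /g0 (normalize_lc w0E) lc_delta lcZ lcB.
Qed.
Let w2E : w2 = lc c2.
Proof.
rewrite /w2; set t0 := dotV _ g0; set t1 := dotV _ g1.
by rewrite /g1 /g0 (normalize_lc w1E) (normalize_lc w0E) lc_delta !lcZ !lcB.
Qed.

Let w0_neq0 : w0 != 0. Proof. by rewrite w0E; apply: (@lc_neq0 _ i0); rewrite /c0 oner_eq0. Qed.
Let w1_neq0 : w1 != 0.
Proof. by rewrite w1E; apply: (@lc_neq0 _ i1); rewrite /c1 /c0 /= !(mulr0, subr0) oner_eq0. Qed.
Let w2_neq0 : w2 != 0.
Proof. by rewrite w2E; apply: (@lc_neq0 _ i2); rewrite /c2 /c1 /c0 /= !(mulr0, subr0) oner_eq0. Qed.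

Let g00 : dotV g0 g0 = 1. Proof. exact: dot_normalize. Qed.
Let g11 : dotV g1 g1 = 1. Proof. exact: dot_normalize. Qed.
Let g22 : dotV g2 g2 = 1. Proof. exact: dot_normalize. Qed.
Let g10 : dotV g1 g0 = 0.
Proof. by rewrite dotZl /w1 dotBl (dotZl (dotV _ g0)) g00 mulr1 subrr mulr0. Qed.
Let g20 : dotV g2 g0 = 0.
Proof.
rewrite dotZl /w2 !dotBl (dotZl (dotV _ g0)) (dotZl (dotV _ g1)) g00 g10.
by rewrite mulr1 mulr0 subrr subr0 mulr0.
Qed.
Let g21 : dotV g2 g1 = 0.
Proof.
rewrite dotZl /w2 !dotBl (dotZl (dotV _ g0)) (dotZl (dotV _ g1)) g11 (dotC g0) g10.
by rewrite mulr1 mulr0 subr0 subrr mulr0.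
Qed.

Lemma exists_pos_orthonormal : exists e, pos_wrt o e /\ orthonormalV dotV e.
Proof.
pose e i := match (i : nat) with 0 => g0 | 1 => g1 | _ => g2 end.
pose C : 'M[R]_3 := \matrix_(i, k)
  match (i : nat) with 0 => s w0 * c0 k | 1 => s w1 * c1 k | _ => s w2 * c2 k end.
exists e; split; last first.
  by do 2!apply: ord3_ind; rewrite /= ?g00 ?g11 ?g22 ?g10 ?g20 ?g21 // dotC ?g10 ?g20 ?g21.
exists C; split.
  apply: ord3_ind => /=; [rewrite /g0 (normalize_lc w0E) | rewrite /g1 (normalize_lc w1E)
    | rewrite /g2 (normalize_lc w2E)]; by apply: eq_bigr => k _; rewrite mxE.
rewrite det_mx33 !mxE /c2 /c1 /c0 /=.
have := mulr_gt0 (s_gt0 w0_neq0) (mulr_gt0 (s_gt0 w1_neq0) (s_gt0 w2_neq0)).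
by congr (_ < _); ring.
Qed.

End GramSchmidt.

Section OrthonormalBasis.
Variable e : 'I_3 -> V.
Hypothesis eON : orthonormalV dotV e.

Lemma dot_sum_orthonormal (a : 'I_3 -> R) j : dotV (\sum_i a i *: e i) (e j) = a j.
Proof.
rewrite dot_suml; under eq_bigr do rewrite dotZl eON.
by move: j; apply: ord3_ind; rewrite big_ord3 /= ?mulr0 ?mulr1 ?addr0 ?add0r.
Qed.

Lemma orthonormal_coord_eq0 (a : 'I_3 -> R) : \sum_i a i *: e i = 0 -> forall j, a j = 0.
Proof. by move=> h j; rewrite -(dot_sum_orthonormal a j) h dot0l. Qed.

Lemma orthonormal_expand v : v = \sum_i dotV v (e i) *: e i.
Proof.
pose X := [tuple e i | i < 3].
have XE (i : 'I_3) : X`_i = e i by rewrite -tnth_nth tnth_mktuple.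
have X_free : free X.
  apply/freeP => k Hk; apply: orthonormal_coord_eq0.
  by rewrite -[RHS]Hk; apply: eq_bigr => j _; rewrite XE.
have X_span : (<<X>> = fullv)%VS.
  apply/eqP; rewrite eqEdim subvf (dim_euclidean3 V3).
  by move: X_free; rewrite /free => /eqP ->; rewrite size_tuple.
have /coord_span vE : v \in <<X>>%VS by rewrite X_span memvf.
have coordE j : coord X j v = dotV v (e j).
  by rewrite {2}vE; under eq_bigr do rewrite XE; rewrite dot_sum_orthonormal.
by rewrite {1}vE; apply: eq_bigr => i _; rewrite XE coordE.
Qed.

Lemma dot_orthonormal u w : dotV u w = \sum_i dotV u (e i) * dotV w (e i).
Proof.
rewrite {1}(orthonormal_expand u) dot_suml.
by apply: eq_bigr => i _; rewrite dotZl (dotC (e i)).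
Qed.

Lemma orthonormal_ext u w : (forall i, dotV u (e i) = dotV w (e i)) -> u = w.
Proof.
move=> h; rewrite (orthonormal_expand u) [RHS]orthonormal_expand.
by apply: eq_bigr => i _; rewrite h.
Qed.

Definition coords (u : V) (i : 'I_3) : R := dotV u (e i).

Lemma crossV_coords u w : crossV dotV e u w = \sum_k cross3 (coords u) (coords w) k *: e k.
Proof.
rewrite /crossV; under eq_bigr do rewrite exchange_big.
rewrite exchange_big; apply: eq_bigr => k _.
rewrite -sum_levi_cross3 scaler_suml; apply: eq_bigr => i _.
by rewrite scaler_suml.
Qed.

Lemma coords_crossV u w c : dotV (crossV dotV e u w) (e c) = cross3 (coords u) (coords w) c.
Proof. by rewrite crossV_coords dot_sum_orthonormal. Qed.

Lemma crossV_linear_l a u u' w :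
  crossV dotV e (a *: u + u') w = a *: crossV dotV e u w + crossV dotV e u' w.
Proof.
apply: orthonormal_ext => c; rewrite dotDl dotZl !coords_crossV.
by move: c; apply: ord3_ind; rewrite /cross3 /coords /= !dotDl !dotZl; ring.
Qed.

Lemma crossV_linear_r a u u' w :
  crossV dotV e w (a *: u + u') = a *: crossV dotV e w u + crossV dotV e w u'.
Proof.
apply: orthonormal_ext => c; rewrite dotDl dotZl !coords_crossV.
by move: c; apply: ord3_ind; rewrite /cross3 /coords /= !dotDl !dotZl; ring.
Qed.

Lemma crossV_sumr u (a : 'I_3 -> R) (w : 'I_3 -> V) :
  crossV dotV e u (\sum_i a i *: w i) = \sum_i a i *: crossV dotV e u (w i).
Proof.
have crossD x y : crossV dotV e u (x + y) = crossV dotV e u x + crossV dotV e u y.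
  by have := crossV_linear_r 1 x y u; rewrite !scale1r.
rewrite (big_morph _ crossD (crossV0r e u)); apply: eq_bigr => i _.
by have := crossV_linear_r (a i) (w i) 0 u; rewrite !addr0 crossV0r addr0.
Qed.

Lemma dot_crossV_swap u v w : dotV (crossV dotV e u v) w = dotV u (crossV dotV e v w).
Proof.
rewrite dot_orthonormal [RHS]dot_orthonormal.
under eq_bigr do rewrite coords_crossV.
under [in RHS]eq_bigr do rewrite coords_crossV.
by rewrite !big_ord3 /cross3 /coords /=; ring.
Qed.

Lemma dot_crossV_skew u v w : dotV u (crossV dotV e v w) + dotV (crossV dotV e v u) w = 0.
Proof.
rewrite dot_orthonormal [X in _ + X]dot_orthonormal.
under eq_bigr do rewrite coords_crossV.
under [X in _ + X]eq_bigr do rewrite coords_crossV.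
by rewrite !big_ord3 /cross3 /coords /=; ring.
Qed.

Lemma crossV_suml u (a : 'I_3 -> R) (w : 'I_3 -> V) :
  crossV dotV e (\sum_i a i *: w i) u = \sum_i a i *: crossV dotV e (w i) u.
Proof.
have crossD x y : crossV dotV e (x + y) u = crossV dotV e x u + crossV dotV e y u.
  by have := crossV_linear_l 1 x y u; rewrite !scale1r.
rewrite (big_morph _ crossD (crossV0l e u)); apply: eq_bigr => i _.
by have := crossV_linear_l (a i) (w i) 0 u; rewrite !addr0 crossV0l addr0.
Qed.

Lemma crossV_basis d i :
  crossV dotV e d (e i) = \sum_j (\sum_k levi R i j k * dotV d (e k)) *: e j.
Proof.
apply: orthonormal_ext => c; rewrite coords_crossV dot_sum_orthonormal.
have -> : coords (e i) = fun l => (i == l)%:R.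
  by apply: functional_extensionality => l; rewrite /coords eON.
by move: i c; do 2!apply: ord3_ind; rewrite big_ord3 !levi_cross3 /cross3 /coords /=; ring.
Qed.

Lemma crossV_basis_inj u u' :
  (forall i, crossV dotV e u (e i) = crossV dotV e u' (e i)) -> u = u'.
Proof.
move=> h; have h' i c : cross3 (coords u) (coords (e i)) c = cross3 (coords u') (coords (e i)) c.
  by rewrite -!coords_crossV h.
apply: orthonormal_ext; apply: ord3_ind.
- by have := h' i1 i2; rewrite /cross3 /coords /= !eON /= !mulr1 !mulr0 !subr0.
- by have := h' i2 i0; rewrite /cross3 /coords /= !eON /= !mulr1 !mulr0 !subr0.
- by have := h' i0 i1; rewrite /cross3 /coords /= !eON /= !mulr1 !mulr0 !subr0.
Qed.

End OrthonormalBasis.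

Lemma det_dot_gt0 (o e v : 'I_3 -> V) :
  (forall a, \sum_k a k *: o k = 0 -> forall k, a k = 0) ->
  pos_wrt o e -> orthonormalV dotV e -> pos_wrt o v ->
  0 < \det (\matrix_(j, k) dotV (v j) (e k)).
Proof.
move=> o_free [C [eC detC]] eON [B [vB detB]].
have o_coord_uniq a b : \sum_k a k *: o k = \sum_k b k *: o k -> forall k, a k = b k.
  move=> ab k; apply/eqP; rewrite -subr_eq0; apply/eqP.
  apply: (o_free (fun k => a k - b k)).
  by under eq_bigr do rewrite scalerBl; rewrite sumrB ab subrr.
set Q := \matrix_(j, k) dotV (v j) (e k).
have BQC : B = Q *m C.
  apply/matrixP => j; apply: (o_coord_uniq (B j) (fun k => (Q *m C) j k)).
  under [RHS]eq_bigr do rewrite mxE.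
  have vQ i : dotV (v j) (e i) = Q j i by rewrite mxE.
  rewrite -vB {1}(orthonormal_expand eON (v j)).
  under [LHS]eq_bigr do rewrite vQ eC scaler_sumr.
  rewrite exchange_big; apply: eq_bigr => l _; rewrite scaler_suml.
  by apply: eq_bigr => a _; rewrite scalerA.
by move: detB; rewrite BQC det_mulmx pmulr_lgt0.
Qed.

(* Changing positive orthonormal frames is a rotation Q, and det Q = 1 makes
   cross3 equivariant under Q. *)
Lemma crossV_frame_invariant (o e f : 'I_3 -> V) :
  (forall a, \sum_k a k *: o k = 0 -> forall k, a k = 0) ->
  pos_wrt o e -> orthonormalV dotV e -> pos_wrt o f -> orthonormalV dotV f ->
  forall u w, crossV dotV e u w = crossV dotV f u w.
Proof.
move=> o_free epos eON fpos fON u w.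
pose Q : 'M[R]_3 := \matrix_(i, a) dotV (e i) (f a).
have eQ i : e i = \sum_a Q i a *: f a.
  by rewrite {1}(orthonormal_expand fON (e i)); apply: eq_bigr => a _; rewrite mxE.
have coordsQ x : coords e x = fun i => \sum_a Q i a * coords f x a.
  apply: functional_extensionality => i.
  by rewrite /coords eQ dot_sumr; apply: eq_bigr => a _; rewrite dotZr.
have QQt : Q *m Q^T = 1%:M.
  apply/matrixP => i j; rewrite !mxE -eON (dot_orthonormal fON).
  by apply: eq_bigr => a _; rewrite !mxE.
have detQ : \det Q = 1.
  have detQ_gt0 : 0 < \det Q := det_dot_gt0 o_free fpos fON epos.
  have : \det Q * \det Q = 1 by rewrite -{2}det_tr -det_mulmx QQt det1.
  by move=> h; nra.
apply: (orthonormal_ext fON) => c.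
rewrite coords_crossV // crossV_coords dot_suml !coordsQ.
have eQf k : dotV (e k) (f c) = Q k c by rewrite mxE.
under eq_bigr do rewrite dotZl eQf.
by rewrite cross3_mulmx detQ mul1r.
Qed.

End Euclidean3.

Record dual_euclidean_module (R : realType) (M V : vectType R) (eps : {linear M -> M})
    (sp : M -> M -> dual R) (OR : 'I_3 -> M) (pi : {linear M -> V}) (dotV : V -> V -> R)
    : Prop := DualEuclideanModule {
  eps_eps : forall x, eps (eps x) = 0;
  spC : forall x y, sp x y = sp y x;
  spDl : forall x y z, sp (x + y) z = dual_add (sp x z) (sp y z);
  spZl : forall (a : R) x y, sp (a *: x) y = dual_mul (dual_real a) (sp x y);
  spEl : forall x y, sp (eps x) y = dual_mul (dual_epsilon R) (sp x y);
  sp_ge0 : forall x, 0 <= dRe (sp x x);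
  sp_eq0 : forall x, dRe (sp x x) = 0 <-> exists y, x = eps y;
  OR_Dbasis : is_Dbasis eps OR;
  pi_surj : forall v, exists x, pi x = v;
  pi_eq0 : forall x, pi x = 0 <-> exists y, x = eps y;
  dotV_pi : forall x y, dotV (pi x) (pi y) = dRe (sp x y) }.

Section DualEuclideanModule.
Variables (R : realType) (M V : vectType R).
Variables (eps : {linear M -> M}) (sp : M -> M -> dual R) (OR : 'I_3 -> M).
Variables (pi : {linear M -> V}) (dotV : V -> V -> R).
Hypothesis G : dual_euclidean_module eps sp OR pi dotV.

Let eps_eps := eps_eps G.
Let spC := spC G.
Let spDl := spDl G.
Let spZl := spZl G.
Let spEl := spEl G.
Let sp_ge0 := sp_ge0 G.
Let sp_eq0 := sp_eq0 G.
Let OR_Dbasis := OR_Dbasis G.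
Let pi_surj := pi_surj G.
Let pi_eq0 := pi_eq0 G.
Let dotV_pi := dotV_pi G.

Lemma ReDl x y z : dRe (sp (x + y) z) = dRe (sp x z) + dRe (sp y z).
Proof. by rewrite spDl. Qed.
Lemma ReZl a x y : dRe (sp (a *: x) y) = a * dRe (sp x y).
Proof. by rewrite spZl. Qed.
Lemma ReEl x y : dRe (sp (eps x) y) = 0.
Proof. by rewrite spEl /dRe /= mul0r. Qed.
Lemma DuDl x y z : dDu (sp (x + y) z) = dDu (sp x z) + dDu (sp y z).
Proof. by rewrite spDl. Qed.
Lemma DuZl a x y : dDu (sp (a *: x) y) = a * dDu (sp x y).
Proof. by rewrite spZl /dDu /= mul0r addr0. Qed.
Lemma DuEl x y : dDu (sp (eps x) y) = dRe (sp x y).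
Proof. by rewrite spEl /dDu /= mul0r add0r mul1r. Qed.
Lemma DuNl x y : dDu (sp (- x) y) = - dDu (sp x y).
Proof. by rewrite -scaleN1r DuZl mulN1r. Qed.
Lemma ReEr x y : dRe (sp y (eps x)) = 0.
Proof. by rewrite spC ReEl. Qed.
Lemma DuDr x y z : dDu (sp z (x + y)) = dDu (sp z x) + dDu (sp z y).
Proof. by rewrite !(spC z) DuDl. Qed.
Lemma DuZr a x y : dDu (sp y (a *: x)) = a * dDu (sp y x).
Proof. by rewrite !(spC y) DuZl. Qed.
Lemma DuEr x y : dDu (sp y (eps x)) = dRe (sp y x).
Proof. by rewrite spC DuEl spC. Qed.
Lemma DuNr x y : dDu (sp y (- x)) = - dDu (sp y x).
Proof. by rewrite -scaleN1r DuZr mulN1r. Qed.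
Lemma Du_suml I (r : seq I) (P : pred I) (F : I -> M) y :
  dDu (sp (\sum_(i <- r | P i) F i) y) = \sum_(i <- r | P i) dDu (sp (F i) y).
Proof.
apply: (big_morph (fun x => dDu (sp x y)) (fun a b => DuDl a b y)).
by rewrite -(scale0r 0) DuZl mul0r.
Qed.
Lemma Du_sumr I (r : seq I) (P : pred I) (F : I -> M) y :
  dDu (sp y (\sum_(i <- r | P i) F i)) = \sum_(i <- r | P i) dDu (sp y (F i)).
Proof. by rewrite spC Du_suml; apply: eq_bigr => i _; rewrite spC. Qed.

Lemma pi_eps y : pi (eps y) = 0.
Proof. by apply/pi_eq0; exists y. Qed.

Lemma eps_eq0 x : eps x = 0 <-> pi x = 0.
Proof.
split=> [epsx0|/pi_eq0 [y ->]]; last by rewrite eps_eps.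
have /sp_eq0 [y ->] : dRe (sp x x) = 0 by rewrite -DuEl epsx0 -(scale0r 0) DuZl mul0r.
exact: pi_eps.
Qed.

Lemma eps_eq x y : eps x = eps y <-> pi x = pi y.
Proof.
by split=> h; apply/eqP; rewrite -subr_eq0 -linearB; apply/eqP/eps_eq0; rewrite linearB h subrr.
Qed.

Definition piOR (k : 'I_3) : V := pi (OR k).

Lemma pi_Dcomb (A0 A1 : 'I_3 -> R) :
  pi (\sum_k (A0 k *: OR k + A1 k *: eps (OR k))) = \sum_k A0 k *: piOR k.
Proof.
by rewrite linear_sum; apply: eq_bigr => k _; rewrite linearD !linearZ_LR pi_eps scaler0 addr0.
Qed.

Lemma piOR_span v : exists a : 'I_3 -> R, v = \sum_k a k *: piOR k.
Proof.
have [x <-] := pi_surj v; have [c ->] := OR_Dbasis.1 x.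
exists (fun k => (c k).1); rewrite /dcomb linear_sum; apply: eq_bigr => k _.
by rewrite /dscale linearD !linearZ_LR pi_eps scaler0 addr0.
Qed.

Lemma piOR_free a : \sum_k a k *: piOR k = 0 -> forall k, a k = 0.
Proof.
move=> a0.
have /pi_eq0 [y ey] : pi (\sum_k a k *: OR k) = 0.
  by rewrite linear_sum -[RHS]a0; apply: eq_bigr => k _; rewrite linearZ_LR.
have [c yc] := OR_Dbasis.1 y.
suff /(OR_Dbasis.2) acE : dcomb eps OR (fun k => (a k, 0)) = dcomb eps OR (fun k => (0, (c k).1)).
  by move=> k; case: (acE k).
rewrite /dcomb /dscale /=.
under eq_bigr do rewrite scale0r addr0.
under [in RHS]eq_bigr do rewrite scale0r add0r.
rewrite ey yc /dcomb linear_sum; apply: eq_bigr => k _.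
by rewrite /dscale linearD !linearZ_LR eps_eps scaler0 addr0.
Qed.

Lemma euclidean3_quotient : euclidean3 dotV.
Proof.
split.
- apply: (@size_basis _ _ _ 3 [tuple piOR i | i < 3]); apply/andP; split.
    apply/eqP/vspaceP => v; rewrite memvf; have [a ->] := piOR_span v.
    apply: memv_suml => i _; apply/memvZ/memv_span.
    by rewrite -[piOR i](tnth_mktuple piOR) mem_tnth.
  apply/freeP => k k0; apply: piOR_free.
  by rewrite -[RHS]k0; apply: eq_bigr => j _; rewrite -tnth_nth tnth_mktuple.
- by move=> u w; have [x <-] := pi_surj u; have [y <-] := pi_surj w; rewrite !dotV_pi spC.
- move=> a u u' w; have [x <-] := pi_surj u; have [x' <-] := pi_surj u'.
  by have [y <-] := pi_surj w; rewrite -linearZ_LR -linearD !dotV_pi ReDl ReZl.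
- move=> u; have [x <-] := pi_surj u; rewrite dotV_pi => pix_neq0.
  rewrite lt_def sp_ge0 andbT; apply/eqP => /sp_eq0 [y xE].
  by move: pix_neq0; rewrite xE pi_eps eqxx.
Qed.

Let V3 : euclidean3 dotV := euclidean3_quotient.
#[local] Existing Instance V3.

Local Notation E := (Espace eps sp).

Lemma E_pi_eq0 (A : E) x : x \in sval A -> pi x = 0 -> x = 0.
Proof. by case: A => P /= [_ [_ P_eps]] xP /pi_eq0; apply: P_eps. Qed.

Lemma E_isotropic (A : E) x y : x \in sval A -> y \in sval A -> dDu (sp x y) = 0.
Proof. by case: A => P /= [_ [P_iso _]]; apply: P_iso. Qed.

Lemma lift_ex (A : E) v : exists a, (a \in sval A) && (pi a == v).
Proof.
case: A => P [dimP [_ P_eps]] /=.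
have kerP : (P :&: lker (linfun pi))%VS = 0%VS.
  apply/eqP; rewrite -subv0; apply/subvP => x; rewrite memv_cap memv_ker lfunE memv0.
  by case/andP => xP /eqP /pi_eq0 xE; apply/eqP; apply: P_eps.
have imgP : (linfun pi @: P)%VS = fullv.
  by apply/eqP; rewrite eqEdim subvf (dim_euclidean3 V3) (limg_dim_eq kerP) dimP.
have : v \in (linfun pi @: P)%VS by rewrite imgP memvf.
by case/memv_imgP => a aP ->; exists a; rewrite aP lfunE eqxx.
Qed.

Definition lift (A : E) (v : V) : M := xchoose (lift_ex A v).

Lemma lift_in (A : E) v : lift A v \in sval A.
Proof. by case/andP: (xchooseP (lift_ex A v)). Qed.
Lemma pi_lift (A : E) v : pi (lift A v) = v.
Proof. by case/andP: (xchooseP (lift_ex A v)) => _ /eqP. Qed.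

Lemma lift_uniq (A : E) v a : a \in sval A -> pi a = v -> lift A v = a.
Proof.
move=> aA pa; apply/eqP; rewrite -subr_eq0; apply/eqP; apply: (@E_pi_eq0 A).
  by rewrite memvB // lift_in.
by rewrite linearB pi_lift pa subrr.
Qed.
Lemma lift_is_lift (A : E) v x : is_lift pi (sval A) v x -> x = lift A v.
Proof. by case=> xA pix; rewrite (lift_uniq xA pix). Qed.
Lemma liftD (A : E) u w : lift A (u + w) = lift A u + lift A w.
Proof. by apply: lift_uniq; rewrite ?memvD ?lift_in // linearD !pi_lift. Qed.
Lemma liftZ (A : E) a u : lift A (a *: u) = a *: lift A u.
Proof. by apply: lift_uniq; rewrite ?memvZ ?lift_in // linearZ_LR !pi_lift. Qed.
Lemma lift_sum (A : E) I (r : seq I) (P : pred I) (F : I -> V) :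
  lift A (\sum_(i <- r | P i) F i) = \sum_(i <- r | P i) lift A (F i).
Proof. by apply: (big_morph _ (liftD A)); apply: lift_uniq; rewrite ?mem0v ?linear0. Qed.
Lemma Du_lift (A : E) u w : dDu (sp (lift A u) (lift A w)) = 0.
Proof. by apply: E_isotropic; apply: lift_in. Qed.
Lemma Re_lift (A B : E) u w : dRe (sp (lift A u) (lift B w)) = dotV u w.
Proof. by rewrite -dotV_pi !pi_lift. Qed.
Lemma eps_lift (A B : E) u : eps (lift A u) = eps (lift B u).
Proof. by apply/eps_eq; rewrite !pi_lift. Qed.

Lemma lift_eps_decomp (A : E) z : exists y, z == lift A (pi z) + eps y.
Proof.
have /pi_eq0 [y yE] : pi (z - lift A (pi z)) = 0 by rewrite linearB pi_lift subrr.
by exists y; rewrite -yE addrC subrK.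
Qed.

Definition beta (z : M) (A : E) : V := pi (xchoose (lift_eps_decomp A z)).

Lemma beta_dot z A u : dotV (beta z A) u = dDu (sp z (lift A u)).
Proof.
rewrite {2}(eqP (xchooseP (lift_eps_decomp A z))) DuDl Du_lift add0r DuEl.
by rewrite -dotV_pi pi_lift.
Qed.

Lemma beta_decomp z (A : E) a x : a \in sval A -> z = a + eps x -> beta z A = pi x.
Proof.
move=> aA ->; apply: dot_ext => u.
by rewrite beta_dot DuDl DuEl (E_isotropic aA (lift_in A u)) add0r -dotV_pi pi_lift.
Qed.

Lemma beta_decompP z (A : E) v :
  (exists a x, a \in sval A /\ pi x = v /\ z = a + eps x) <-> v = beta z A.
Proof.
split=> [[a [x [aA [<- zE]]]]|->]; first by rewrite (beta_decomp aA zE).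
have [y /eqP zE] := lift_eps_decomp A z.
by exists (lift A (pi z)), y; rewrite (beta_decomp (lift_in A _) zE) lift_in.
Qed.

Lemma beta_eps x A : beta (eps x) A = pi x.
Proof. by apply: (beta_decomp (mem0v _)); rewrite add0r. Qed.
Lemma betaD x y A : beta (x + y) A = beta x A + beta y A.
Proof. by apply: dot_ext => u; rewrite dotDl !beta_dot DuDl. Qed.
Lemma betaZ a x A : beta (a *: x) A = a *: beta x A.
Proof. by apply: dot_ext => u; rewrite dotZl !beta_dot DuZl. Qed.

Lemma Du_lift_skew (B A : E) u w :
  dDu (sp (lift B u) (lift A w)) + dDu (sp (lift B w) (lift A u)) = 0.
Proof.
have [q qE] : exists q, lift B w = lift A w + eps q.
  have /pi_eq0 [q qE] : pi (lift B w - lift A w) = 0 by rewrite linearB !pi_lift subrr.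
  by exists q; rewrite -qE addrC subrK.
have := Du_lift B u w; rewrite qE DuDr DuEr => <-.
by rewrite DuDl DuEl Du_lift add0r -!dotV_pi !pi_lift dotC.
Qed.

Lemma eps_lift_crossV (A : E) e : orthonormalV dotV e -> forall d i,
  \sum_j \sum_k (levi R i j k * dotV d (e k)) *: eps (lift A (e j))
  = eps (lift A (crossV dotV e d (e i))).
Proof.
move=> eON d i; rewrite (crossV_basis eON) lift_sum linear_sum; apply: eq_bigr => j _.
by rewrite liftZ linearZ_LR scaler_suml.
Qed.

Section Frame.
Variable f : 'I_3 -> V.
Hypothesis fP : posONV pi OR dotV f.
Let fON : orthonormalV dotV f := fP.2.

Let N (B A : E) (i j : 'I_3) : R := dDu (sp (lift B (f i)) (lift A (f j))).

Let N_diag B A i : N B A i i = 0.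
Proof. by have := Du_lift_skew B A (f i) (f i); rewrite -/(N B A i i) => h; lra. Qed.
Let N_skew B A i j : N B A i j = - N B A j i.
Proof. by have := Du_lift_skew B A (f i) (f j); rewrite -/(N B A i j) -/(N B A j i) => h; lra. Qed.

(* B - A is the axial vector of the skew form N B A in the frame f. *)
Definition minus (B A : E) : V :=
  \sum_(c < 3)
    (match (c : nat) with 0 => N B A i1 i2 | 1 => N B A i2 i0 | _ => N B A i0 i1 end) *: f c.

Lemma lift_minus (B A : E) v :
  lift B v = lift A v + eps (lift A (crossV dotV f (minus B A) v)).
Proof.
have [y yE] : exists y, lift B v - lift A v = eps y.
  by apply/pi_eq0; rewrite linearB !pi_lift subrr.
suff -> : eps (lift A (crossV dotV f (minus B A) v)) = eps y by rewrite -yE addrC subrK.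
apply/eps_eq; rewrite pi_lift; apply: (orthonormal_ext fON) => c.
rewrite -{2}(pi_lift A (f c)) dotV_pi -DuEl -yE DuDl DuNl Du_lift oppr0 addr0.
rewrite [in RHS](orthonormal_expand fON v) lift_sum Du_suml.
under eq_bigr do rewrite liftZ DuZl -/(N B A _ c).
rewrite coords_crossV //.
move: c; apply: ord3_ind; rewrite /cross3 /coords /minus !dot_sum_orthonormal // big_ord3 /=.
all: rewrite !N_diag ?(N_skew B A i1 i0) ?(N_skew B A i2 i1) ?(N_skew B A i0 i2); ring.
Qed.

Lemma SubRel_lift_minus (B A : E) d :
  (forall v, lift B v = lift A v + eps (lift A (crossV dotV f d v))) ->
  SubRel eps pi OR dotV (sval B) (sval A) d.
Proof.
move=> liftB e eP xA xB xAP xBP i.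
have xAE j : xA j = lift A (e j) by apply: lift_is_lift.
rewrite (lift_is_lift (xBP i)) liftB xAE.
under [X in _ = _ + X]eq_bigr do under eq_bigr do rewrite xAE.
by rewrite eps_lift_crossV ?(crossV_frame_invariant (@piOR_free) fP.1 fON eP.1 eP.2) //; case: eP.
Qed.

Lemma SubRel_minus (A B : E) d :
  SubRel eps pi OR dotV (sval B) (sval A) d <-> d = minus B A.
Proof.
split=> [subBA|->]; last by apply: SubRel_lift_minus; apply: lift_minus.
have liftf j : is_lift pi (sval A) (f j) (lift A (f j)) by split; rewrite ?lift_in ?pi_lift.
have liftBf j : is_lift pi (sval B) (f j) (lift B (f j)) by split; rewrite ?lift_in ?pi_lift.
apply: (crossV_basis_inj fON) => i; have := subBA f fP _ _ liftf liftBf i.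
by rewrite (lift_minus B A) (eps_lift_crossV _ fON) => /addrI /eps_eq; rewrite !pi_lift => ->.
Qed.

Lemma minus_add (A B C : E) : minus B A + minus C B = minus C A.
Proof.
apply/SubRel_minus; apply: SubRel_lift_minus => v.
rewrite (lift_minus C B v) (lift_minus B A v) (eps_lift B A) -addrA -linearD -liftD.
by have := crossV_linear_l fON 1 (minus B A) (minus C B) v; rewrite !scale1r => <-.
Qed.

Lemma span_isotropic_inE (x : 'I_3 -> M) : (forall i, pi (x i) = f i) ->
  (forall i j, dDu (sp (x i) (x j)) = 0) -> inE eps sp <<[tuple x i | i < 3]>>%VS.
Proof.
move=> pix x_iso.
have pi_sum a : pi (\sum_i a i *: x i) = \sum_i a i *: f i.
  by rewrite linear_sum; apply: eq_bigr => i _; rewrite linearZ_LR pix.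
have spanP y : reflect (exists a, y = \sum_i a i *: x i) (y \in <<[tuple x i | i < 3]>>%VS).
  apply: (iffP idP) => [/coord_span ->|[a ->]].
    by eexists; apply: eq_bigr => i _; rewrite -tnth_nth tnth_mktuple.
  apply: memv_suml => i _; apply/memvZ/memv_span.
  by rewrite -[x i](tnth_mktuple x) mem_tnth.
split; [|split].
- have /eqP -> : free [tuple x i | i < 3]; last by rewrite size_tuple.
  apply/freeP => k k0; apply: (orthonormal_coord_eq0 fON); rewrite -pi_sum.
  suff -> : \sum_i k i *: x i = 0 by rewrite linear0.
  by rewrite -[RHS]k0; apply: eq_bigr => j _; rewrite -tnth_nth tnth_mktuple.
- move=> y y' /spanP [a ->] /spanP [b ->].
  rewrite Du_suml big1 // => i _; rewrite DuZl Du_sumr big1 ?mulr0 // => j _.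
  by rewrite DuZr x_iso mulr0.
- move=> y /spanP [a ->] [z zE].
  have /(orthonormal_coord_eq0 fON) a0 : \sum_i a i *: f i = 0 by rewrite -pi_sum zE pi_eps.
  by rewrite big1 // => i _; rewrite a0 scale0r.
Qed.

Definition isotropic_point (x : 'I_3 -> M) (pix : forall i, pi (x i) = f i)
  (x_iso : forall i j, dDu (sp (x i) (x j)) = 0) : E :=
  exist _ _ (span_isotropic_inE pix x_iso).

Lemma lift_isotropic_point x pix x_iso v :
  lift (@isotropic_point x pix x_iso) v = \sum_i dotV v (f i) *: x i.
Proof.
apply: lift_uniq.
  apply: memv_suml => i _; apply/memvZ/memv_span.
  by rewrite -[x i](tnth_mktuple x) mem_tnth.
rewrite linear_sum [RHS](orthonormal_expand fON v); apply: eq_bigr => i _.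
by rewrite linearZ_LR pix.
Qed.

Lemma E_lift_inj (B B' : E) : (forall w, lift B w = lift B' w) -> B = B'.
Proof.
move=> liftBB'.
have BB' : sval B = sval B'.
  apply/vspaceP => x; apply/idP/idP => xP.
    by rewrite -(lift_uniq xP (erefl (pi x))) liftBB' lift_in.
  by rewrite -(lift_uniq xP (erefl (pi x))) -liftBB' lift_in.
move: B B' liftBB' BB' => [P PE] [P' P'E] /= _ PP'; subst P'.
by rewrite (proof_irrelevance _ PE P'E).
Qed.

(* The point A + v has lifts w |-> w^A + eps (v x w)^A; its isotropy is the
   skew-symmetry of v x _. *)
Lemma minus_surj (A : E) v : exists B : E, minus B A = v.
Proof.
pose x i := lift A (f i) + eps (lift A (crossV dotV f v (f i))).
have pix i : pi (x i) = f i by rewrite linearD pi_lift pi_eps addr0.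
have x_iso i j : dDu (sp (x i) (x j)) = 0.
  rewrite /x DuDl !DuDr DuEl DuEr DuEl ReEr Du_lift !Re_lift addr0 add0r.
  exact: dot_crossV_skew.
exists (isotropic_point pix x_iso); symmetry; apply/SubRel_minus; apply: SubRel_lift_minus => w.
rewrite lift_isotropic_point /x; under eq_bigr do rewrite scalerDr.
rewrite big_split /= [in RHS](orthonormal_expand fON w) crossV_sumr // !lift_sum linear_sum.
by congr (_ + _); apply: eq_bigr => i _; rewrite liftZ ?linearZ_LR.
Qed.

Lemma minus_inj (A B B' : E) : minus B A = minus B' A -> B = B'.
Proof. by move=> BB'; apply: E_lift_inj => w; rewrite (lift_minus B A) (lift_minus B' A) BB'. Qed.

(* Any lifts g of f become isotropic after subtracting eps of half their
   Du-Gram matrix. *)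
Lemma E_inhabited : inhabited E.
Proof.
have g_ex i : exists x, pi x == f i by have [x <-] := pi_surj (f i); exists x.
pose g i := xchoose (g_ex i).
have pig i : pi (g i) = f i by apply/eqP/(xchooseP (g_ex i)).
pose b i j := dDu (sp (g i) (g j)).
pose h i := \sum_k (b i k / 2) *: g k.
pose x i := g i - eps (h i).
have pi_h i : pi (h i) = \sum_k (b i k / 2) *: f k.
  by rewrite linear_sum; apply: eq_bigr => k _; rewrite linearZ_LR pig.
have pix i : pi (x i) = f i by rewrite linearB pi_eps subr0 pig.
have x_iso i j : dDu (sp (x i) (x j)) = 0.
  rewrite {1}/x DuDl DuNl DuEl -dotV_pi pix /x DuDr DuNr DuEr -dotV_pi pig !pi_h.
  rewrite [dotV (f i) _]dotC !dot_sum_orthonormal // -/(b i j).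
  have -> : b j i = b i j by rewrite /b spC.
  lra.
by constructor; exact: (isotropic_point pix x_iso).
Qed.

Lemma beta_screw z : is_screw minus pi OR dotV (beta z) (pi z).
Proof.
move=> P Q e eP; apply: dot_ext => u.
rewrite dotBl !beta_dot (lift_minus Q P u) DuDr DuEr addrAC subrr add0r -dotV_pi pi_lift.
by rewrite (crossV_frame_invariant (@piOR_free) eP.1 eP.2 fP.1 fON) dot_crossV_swap.
Qed.

Lemma screw_resultant_uniq s r r' :
  is_screw minus pi OR dotV s r -> is_screw minus pi OR dotV s r' -> r = r'.
Proof.
move=> sr sr'; have [A] := E_inhabited.
apply: (crossV_basis_inj fON) => i; have [B <-] := minus_surj A (f i).
by rewrite -(sr A B f fP) -(sr' A B f fP).
Qed.

Lemma beta_inj x y : beta x =1 beta y -> x = y.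
Proof.
move=> xy; apply/eqP; rewrite -subr_eq0; apply/eqP.
have beta0 A : beta (x - y) A = 0 by rewrite betaD -scaleN1r betaZ scaleN1r xy subrr.
have screw0 : is_screw minus pi OR dotV (beta (x - y)) 0.
  by move=> P Q e _; rewrite !beta0 subrr crossV0l.
have /pi_eq0 [w xyE] := screw_resultant_uniq (beta_screw (x - y)) screw0.
have [A] := E_inhabited; have := beta0 A.
by rewrite xyE beta_eps => /eps_eq0.
Qed.

Lemma beta_surj s r : is_screw minus pi OR dotV s r -> exists z, beta z =1 s.
Proof.
move=> sr; have [A] := E_inhabited.
pose z := lift A r + eps (lift A (s A)).
have betaA : beta z A = s A by rewrite (beta_decomp (lift_in A r) (erefl z)) pi_lift.
exists z => Q; have := beta_screw z A Q fP.
by rewrite linearD pi_lift pi_eps addr0 betaA -(sr A Q f fP) => /addIr.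
Qed.

Lemma beta_sp z1 z2 P :
  (dotV (pi z1) (pi z2), dotV (pi z1) (beta z2 P) + dotV (beta z1 P) (pi z2)) = sp z1 z2.
Proof.
rewrite [RHS]surjective_pairing dotV_pi; congr (_, _); rewrite -/(dDu (sp z1 z2)).
have [y /eqP z2E] := lift_eps_decomp P z2.
by rewrite (beta_decomp (lift_in P _) z2E) beta_dot [in RHS]z2E DuDr DuEr dotV_pi addrC.
Qed.

Lemma beta_posM b : posM eps OR b ->
  forall (P : E) e, posONV pi OR dotV e ->
  forall rl : 'I_3 -> V,
    (forall k, is_screw minus pi OR dotV (fun Q => crossV dotV e (e k) (minus Q P)) (rl k)) ->
    exists A0 A1 : 'M[R]_3,
      (forall j Q, beta (b j) Q =
         \sum_k (A0 j k *: crossV dotV e (e k) (minus Q P) + A1 j k *: rl k)) /\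
      0 < \det A0.
Proof.
move=> [_ [B0 [B1 [bE detB0]]]] P e [epos eON] rl rlP.
have rlE k : rl k = e k.
  apply: esym (screw_resultant_uniq _ (rlP k)) => Q1 Q2 e' [e'pos e'ON] /=.
  rewrite -(minus_add P Q1 Q2) (crossV_frame_invariant (@piOR_free) e'pos e'ON epos eON).
  have := crossV_linear_r eON 1 (minus Q1 P) (minus Q2 Q1) (e k); rewrite !scale1r => ->.
  by rewrite addrAC subrr add0r.
exists (\matrix_(j, k) dotV (pi (b j)) (e k)), (\matrix_(j, k) dotV (beta (b j) P) (e k)).
split.
  move=> j Q; have screwP := beta_screw (b j) P Q (conj epos eON).
  rewrite big_split /=.
  under [X in _ = _ + X]eq_bigr do rewrite rlE mxE.
  under eq_bigr do rewrite mxE.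
  by rewrite -crossV_suml // -!(orthonormal_expand eON) -screwP subrK.
apply: (det_dot_gt0 (@piOR_free) epos eON).
by exists B0; split=> // j; rewrite bE pi_Dcomb.
Qed.

(* In the orthonormal frame pi m of V, beta m is skew (from beta_sp), and both
   sides reduce to the same polynomial in the dual coordinates of x and y. *)
Lemma beta_cross m : posM eps OR m -> orthonormalM sp m ->
  forall (x y : 'I_3 -> dual R) r1 r2,
    is_screw minus pi OR dotV (beta (dcomb eps m x)) r1 ->
    is_screw minus pi OR dotV (beta (dcomb eps m y)) r2 ->
    forall e, posONV pi OR dotV e -> forall P,
      beta (\sum_i \sum_j \sum_k
              dscale eps (dual_mul (dual_real (levi R i j k))
                                   (dual_mul (x i) (y j))) (m k)) P
      = crossV dotV e r1 (beta (dcomb eps m y) P)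
        + crossV dotV e (beta (dcomb eps m x) P) r2.
Proof.
move=> [_ [A0 [A1 [mE detA0]]]] mON x y r1 r2 xr1 yr2 e [epos eON] P.
rewrite -(screw_resultant_uniq (beta_screw _) xr1) -(screw_resultant_uniq (beta_screw _) yr2).
have pim_pos : pos_wrt piOR (fun k => pi (m k)).
  by exists A0; split=> // j; rewrite mE pi_Dcomb.
have pim_ON : orthonormalV dotV (fun k => pi (m k)) by move=> i j; rewrite dotV_pi mON.
rewrite !(crossV_frame_invariant (@piOR_free) epos eON pim_pos pim_ON).
have beta_skew k l : dotV (beta (m k) P) (pi (m l)) = - dotV (beta (m l) P) (pi (m k)).
  by have := beta_sp (m l) (m k) P; rewrite mON => -[_ h]; rewrite dotC; lra.
have beta_diag k : dotV (beta (m k) P) (pi (m k)) = 0 by have := beta_skew k k; lra.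
have pim_dot k l : dotV (pi (m k)) (pi (m l)) = (k == l)%:R by rewrite dotV_pi mON.
apply: (orthonormal_ext pim_ON); apply: ord3_ind;
  rewrite /= dotDl !coords_crossV // /cross3 /coords /dcomb /= !big_ord3 !betaD /dscale ?betaD
    !betaZ !beta_eps !linearD !linearZ_LR !pi_eps !scaler0 !addr0 !dotDl !dotZl !pim_dot /=
    ?(beta_skew i1 i0) ?(beta_skew i2 i1) ?(beta_skew i0 i2) ?beta_diag !levi_cross3 /cross3 /=;
  ring.
Qed.

End Frame.

End DualEuclideanModule.

Theorem theorem3 (R : realType) (M V : vectType R)
  (eps : {linear M -> M}) (sp : M -> M -> dual R) (OR : 'I_3 -> M)
  (pi : {linear M -> V}) (dotV : V -> V -> R) :
  (* M is a D-module: eps^2 = 0 *)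
  (forall x, eps (eps x) = 0) ->
  (* M is free of rank 3 over D *)
  (exists b, is_Dbasis eps b) ->
  (* o is a symmetric D-bilinear map *)
  (forall x y, sp x y = sp y x) ->
  (forall x y z, sp (x + y) z = dual_add (sp x z) (sp y z)) ->
  (forall (a : R) x y, sp (a *: x) y = dual_mul (dual_real a) (sp x y)) ->
  (forall x y, sp (eps x) y = dual_mul (dual_epsilon R) (sp x y)) ->
  (* positivity *)
  (forall x, 0 <= dRe (sp x x)) ->
  (forall x, dRe (sp x x) = 0 <-> exists y, x = eps y) ->
  (* the orientation OR of M is the class of the D-basis OR *)
  is_Dbasis eps OR ->
  (* V = M / eps M with quotient map pi *)
  (forall v, exists x, pi x = v) ->
  (forall x, pi x = 0 <-> exists y, x = eps y) ->
  (* the induced inner product on V *)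
  (forall x y, dotV (pi x) (pi y) = dRe (sp x y)) ->
  (* ---- E is a 3-dim Euclidean affine space modelled on (V, ., or) ---- *)
  \dim (fullv : {vspace V}) = 3%N /\
  (forall u w, dotV u w = dotV w u) /\
  (forall (a : R) u u' w, dotV (a *: u + u') w = a * dotV u w + dotV u' w) /\
  (forall u, u != 0 -> 0 < dotV u u) /\
  exists minus : Espace eps sp -> Espace eps sp -> V,
    (* minus B A = B - A is well defined by the described recipe *)
    (forall (A B : Espace eps sp) d,
        SubRel eps pi OR dotV (proj1_sig B) (proj1_sig A) d <-> d = minus B A) /\
    (* Weyl's axioms *)
    (forall A B C : Espace eps sp, minus B A + minus C B = minus C A) /\
    (forall (A : Espace eps sp) (v : V), exists! B, minus B A = v) /\
  (* ---- the map beta : M -> S ---- *)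
  exists beta : M -> Espace eps sp -> V,
    (* well defined: z = a + eps beta(z)(A) uniquely, a in A *)
    (forall z (A : Espace eps sp) v,
        (exists a x, a \in proj1_sig A /\ pi x = v /\ z = a + eps x) <-> v = beta z A) /\
    (* takes values in screws *)
    (forall z, exists r, is_screw minus pi OR dotV (beta z) r) /\
    (* D-linear *)
    (forall x y A, beta (x + y) A = beta x A + beta y A) /\
    (forall (a : R) x A, beta (a *: x) A = a *: beta x A) /\
    (forall x r, is_screw minus pi OR dotV (beta x) r -> forall A, beta (eps x) A = r) /\
    (* bijective onto the screws *)
    (forall x y, beta x =1 beta y -> x = y) /\
    (forall s r, is_screw minus pi OR dotV s r -> exists z, beta z =1 s) /\
    (* preserves the scalar product *)
    (forall z1 z2 r1 r2 P,
        is_screw minus pi OR dotV (beta z1) r1 ->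
        is_screw minus pi OR dotV (beta z2) r2 ->
        (dotV r1 r2, dotV r1 (beta z2 P) + dotV (beta z1 P) r2) = sp z1 z2) /\
    (* preserves the orientation: positive bases go to bases that are positive
       w.r.t. the basis l_i(Q) = e_i x (Q - P) of any positive orthonormal frame *)
    (forall b, posM eps OR b ->
       forall (P : Espace eps sp) e, posONV pi OR dotV e ->
       forall rl : 'I_3 -> V,
         (forall k, is_screw minus pi OR dotV
                      (fun Q => crossV dotV e (e k) (minus Q P)) (rl k)) ->
         exists A0 A1 : 'M[R]_3,
           (forall j Q, beta (b j) Q =
              \sum_k (A0 j k *: crossV dotV e (e k) (minus Q P) + A1 j k *: rl k)) /\
           0 < \det A0) /\
    (* hence preserves the cross product: beta (z1 x z2) = [beta z1, beta z2] *)
    (forall m, posM eps OR m -> orthonormalM sp m ->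
       forall (x y : 'I_3 -> dual R) r1 r2,
         is_screw minus pi OR dotV (beta (dcomb eps m x)) r1 ->
         is_screw minus pi OR dotV (beta (dcomb eps m y)) r2 ->
         forall e, posONV pi OR dotV e -> forall P,
           beta (\sum_i \sum_j \sum_k
                   dscale eps (dual_mul (dual_real (@levi R i j k))
                                        (dual_mul (x i) (y j))) (m k)) P
           = crossV dotV e r1 (beta (dcomb eps m y) P)
             + crossV dotV e (beta (dcomb eps m x) P) r2).
Proof.
(* Freeness of M is already witnessed by the D-basis OR. *)
move=> eps_eps _ spC spDl spZl spEl sp_ge0 sp_eq0 OR_Dbasis pi_surj pi_eq0 dotV_pi.
have G := DualEuclideanModule eps_eps spC spDl spZl spEl sp_ge0 sp_eq0 OR_Dbasis
  pi_surj pi_eq0 dotV_pi.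
have V3 := euclidean3_quotient G.
have [f [fpos fON]] := exists_pos_orthonormal (piOR_free G).
have fP : posONV pi OR dotV f := conj fpos fON.
have screwE z r : is_screw (minus G f) pi OR dotV (beta G z) r -> r = pi z.
  by move=> zr; apply: (screw_resultant_uniq fP zr (beta_screw G fP z)).
case: V3 => dimV dotC dotDZl dot_gt0; split=> //; split=> //; split=> //; split=> //.
exists (minus G f); split; first exact (SubRel_minus G fP).
split; first exact (minus_add G fP).
split.
  move=> A v; have [B BA] := minus_surj G fP A v.
  by exists B; split=> // B' B'A; apply: (minus_inj fP (etrans BA (esym B'A))).
exists (beta G); split; first exact (beta_decompP G).
split; first by move=> z; exists (pi z); apply: beta_screw.
split; first exact (betaD G).
split; first exact (betaZ G).
split; first by move=> x r /screwE -> A; apply: beta_eps.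
split; first exact (beta_inj fP).
split; first exact (beta_surj fP).
split; first by move=> z1 z2 r1 r2 P /screwE -> /screwE ->; apply: beta_sp.
split; [exact (beta_posM fP) | exact (beta_cross fP)].
Qed.
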